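(* For any $F$-weighted boundary stratum $\mathcal{S}$, the cone $C(\mathcal{S})\subset\mathbf{S}_{\mathbb{Q}}(F)$ strictly contains the subspace $N(\mathcal{S})$.
   Context: $F$ is a totally real number field of degree $g$ with trace pairing $\langle x,y\rangle=\mathrm{Tr}_{F/\mathbb{Q}}(xy)$. An $F$-weighted stable curve is a stable curve of arithmetic genus $g$ and geometric genus $0$ with an element of a lattice $\mathcal{I}\subset F$ (rank $g$ additive subgroup) attached to each branch at each node, such that the two branches at a node have opposite weights, the weights on each component sum to zero, and the weights span $\mathcal{I}$. An $F$-weighted boundary stratum $\mathcal{S}$ is the moduli space of weighted stable curves topologically equivalent (weight-preservingly) to a fixed one; its weights are those of its nodes. $\mathrm{Sym}_{\mathbb{Q}}(F)\subset F\otimes_{\mathbb{Q}}F$ is the subspace of symmetric tensors, $\mathbf{S}_{\mathbb{Q}}(F)$ the quotient of $F\otimes_{\mathbb{Q}}F$ by the span of $x\otimes y-y\otimes x$, dual via $\langle a\otimes b,c\otimes d\rangle=\langle a,c\rangle\langle b,d\rangle$. $N(\mathcal{S})\subset\mathbf{S}_{\mathbb{Q}}(F)$ is the annihilator of the span of $\{r\otimes r: r\text{ a weight of }\mathcal{S}\}$, and $C(\mathcal{S})=\{x\in\mathbf{S}_{\mathbb{Q}}(F):\langle x,r\otimes r\rangle\geq 0\text{ for each weight } r\text{ of }\mathcal{S}\}$. *)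

From HB Require Import structures.
From mathcomp Require Import all_boot all_order all_algebra all_field.
Set Implicit Arguments. Unset Strict Implicit. Unset Printing Implicit Defensive.
Import Order.TTheory GRing.Theory Num.Theory.
Local Open Scope ring_scope.

(* The number field F is modelled as a finite-dimensional field extension
   F : fieldExtType rat; its degree over Q is g := \dim {:F}. *)

Section FieldData.
Variable F : fieldExtType rat.

Definition totally_real : Prop :=
  forall (s : {rmorphism F -> algC}) (x : F), s x \is Num.real.

Definition fbasis := vbasis (fullv : {vspace F}).
Definition fb (i : 'I_(\dim {:F})) : F := tnth fbasis i.

(* Tr_{F/Q}(x) = trace of the Q-linear map y |-> x y *)
Definition trF (x : F) : rat :=
  \sum_(i < \dim {:F}) coord fbasis i (x * fb i).

Definition trpair (x y : F) : rat := trF (x * y).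

(* F (x)_Q F, in coordinates w.r.t. the basis fb (x) fb:
   x = \sum_ij x i j fb i (x) fb j *)
Definition tensF := 'M[rat]_(\dim {:F}).

Definition tens (a b : F) : tensF :=
  \matrix_(i, j) (coord fbasis i a * coord fbasis j b).

(* bilinear pairing on F (x) F extending <a(x)b, c(x)d> = <a,c><b,d>;
   it descends to the duality between S_Q(F) and Sym_Q(F). *)
Definition tpair (x y : tensF) : rat :=
  \sum_(i < \dim {:F}) \sum_(j < \dim {:F}) \sum_(k < \dim {:F})
    \sum_(l < \dim {:F})
    x i j * y k l * trpair (fb i) (fb k) * trpair (fb j) (fb l).

(* the subspace of F (x) F spanned by the antisymmetric tensors
   x (x) y - y (x) x; S_Q(F) is the quotient by it *)
Definition antisymF : {vspace tensF} :=
  (\sum_(i < \dim {:F}) \sum_(j < \dim {:F})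
     <[tens (fb i) (fb j) - tens (fb j) (fb i)]>)%VS.

Definition SQ_eq (x y : tensF) : Prop := (x - y) \in antisymF.

(* a lattice I in F: the Z-span of a Q-basis b of F *)
Definition is_lattice_basis (b : seq F) : Prop :=
  size b = \dim {:F} /\ free b.

Definition in_zspan (s : seq F) (x : F) : Prop := inIntSpan (in_tuple s) x.

End FieldData.

(* Combinatorial (dual graph) description of an F-weighted stable curve of
   arithmetic genus g and geometric genus 0 (all components rational, no
   marked points):
   - V : irreducible components, H : branches at nodes (half-edges);
   - vtx h : the component on which the branch h lies;
   - inv : fixed-point-free involution pairing the two branches of a node
     (inv h may lie on the same component: self-nodes allowed);
   - w h : weight in F attached to the branch h. *)
Section Curve.
Variables (F : fieldExtType rat) (V H : finType).
Variables (vtx : H -> V) (inv : H -> H) (w : H -> F).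

Definition adjV : rel V :=
  fun x y => [exists h, (vtx h == x) && (vtx (inv h) == y)].

Definition stable_genus0_graph : Prop :=
  (0 < #|V|)%N /\
  [/\
      (forall h, inv (inv h) = h), (forall h, inv h != h),
      (forall x y, connect adjV x y),
      (* stability of each rational component: at least 3 special points *)
      (forall x, 3 <= #|[set h | vtx h == x]|)%N &
      (* arithmetic genus = #nodes - #components + 1 = g *)
      (#|H| + 2 = 2 * (#|V| + \dim {:F}))%N].

Definition F_weighted_stable_curve (b : seq F) : Prop :=
  [/\ stable_genus0_graph,
      (forall h, w (inv h) = - w h),
      (forall x, \sum_(h | vtx h == x) w h = 0) &
      (forall z, in_zspan [seq w h | h <- enum H] z <-> in_zspan b z)].

Definition weight_squares_span : {vspace tensF F} :=
  (\sum_(h : H) <[tens (w h) (w h)]>)%VS.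

(* N(S): annihilator of the span of the r (x) r (as a predicate on
   representatives in F (x) F of elements of S_Q(F)) *)
Definition N_S (x : tensF F) : Prop :=
  forall y, y \in weight_squares_span -> tpair x y = 0.

Definition C_S (x : tensF F) : Prop :=
  forall h : H, 0 <= tpair x (tens (w h) (w h)).

End Curve.

From HB Require Import structures.
From mathcomp Require Import all_boot all_order all_algebra all_field.
From mathcomp Require Import ring.
Set Implicit Arguments. Unset Strict Implicit. Unset Printing Implicit Defensive.
Import Order.TTheory GRing.Theory Num.Theory.
Local Open Scope ring_scope.

(* For every t in F the pure square t (x) t lies in C(S), because
   <t (x) t, r (x) r> = Tr(t r)^2 is the square of a rational number.  The weights span a lattice of rank g > 0,
   hence some weight r is nonzero, and <r^-1 (x) r^-1, r (x) r> = Tr(1)^2 = g^2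
   is nonzero: r^-1 (x) r^-1 lies in C(S) but not in N(S). *)

Section TracePairing.
Variable F : fieldExtType rat.
Local Notation n := (\dim {:F}).

Lemma fb_coord_expand (a : F) : a = \sum_(i < n) coord (fbasis F) i a *: fb i.
Proof.
rewrite {1}(coord_vbasis (memvf a)); apply: eq_bigr => i _.
by rewrite /fb (tnth_nth 0).
Qed.

Lemma trFD (x y : F) : trF (x + y) = trF x + trF y.
Proof. by rewrite /trF -big_split; apply: eq_bigr => i _; rewrite mulrDl linearD. Qed.

Lemma trF0 : trF (0 : F) = 0.
Proof. by rewrite /trF big1 // => i _; rewrite mul0r linear0. Qed.

Lemma trFZ (c : rat) (x : F) : trF (c *: x) = c * trF x.
Proof. by rewrite /trF mulr_sumr; apply: eq_bigr => i _; rewrite -scalerAl linearZ. Qed.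

Lemma trF_sum (I : Type) (r : seq I) (P : pred I) (f : I -> F) :
  trF (\sum_(i <- r | P i) f i) = \sum_(i <- r | P i) trF (f i).
Proof. exact: (big_morph _ trFD trF0). Qed.

Lemma trF1 : trF (1 : F) = n%:R.
Proof.
rewrite /trF (eq_bigr (fun _ => 1)) ?sumr_const ?card_ord // => i _.
rewrite mul1r /fb (tnth_nth 0) coord_free ?eqxx //.
exact: basis_free (vbasisP _).
Qed.

Lemma trpair_coord (a c : F) : trpair a c =
  \sum_(i < n) \sum_(k < n)
    (coord (fbasis F) i a * coord (fbasis F) k c) * trpair (fb i) (fb k).
Proof.
rewrite /trpair {1}(fb_coord_expand a) {1}(fb_coord_expand c) mulr_suml trF_sum.
apply: eq_bigr => i _; rewrite mulr_sumr trF_sum; apply: eq_bigr => k _.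
by rewrite -scalerAl -scalerAr !trFZ mulrA [_ * coord _ _ _]mulrC.
Qed.

Lemma tpair_tens (a b c d : F) :
  tpair (tens a b) (tens c d) = trpair a c * trpair b d.
Proof.
rewrite (trpair_coord a c) (trpair_coord b d) /tpair mulr_suml.
apply: eq_bigr => i _; rewrite exchange_big /= mulr_suml.
apply: eq_bigr => k _; rewrite mulr_sumr; apply: eq_bigr => j _.
rewrite mulr_sumr; apply: eq_bigr => l _.
rewrite !mxE; ring.
Qed.

Lemma tpair_tens_sqr (a c : F) :
  tpair (tens a a) (tens c c) = trpair a c ^+ 2.
Proof. by rewrite tpair_tens expr2. Qed.

Lemma trpair_Vf (r : F) : r != 0 -> trpair r^-1 r = n%:R.
Proof. by move=> r_neq0; rewrite /trpair mulVf // trF1. Qed.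

End TracePairing.

Section IntegralSpan.
Variable F : fieldExtType rat.

Lemma in_zspan_mem (s : seq F) (x : F) : x \in s -> in_zspan s x.
Proof.
move=> xs; have ix : (index x s < size s)%N by rewrite index_mem.
exists [ffun i : 'I_(size s) => ((i == Ordinal ix) : nat)%:Z].
rewrite (bigD1 (Ordinal ix)) //= ffunE eqxx mulr1z nth_index //.
rewrite big1 ?addr0 // => i /negbTE i_neq.
by rewrite ffunE i_neq mulr0z.
Qed.

Lemma in_zspan_has_nonzero (s : seq F) (x : F) :
  in_zspan s x -> x != 0 -> has (predC1 0) s.
Proof.
case=> a ->; apply: contraLR => /hasPn s0.
rewrite negbK big1 // => i _.
by have /negbNE/eqP -> := s0 _ (mem_nth 0 (ltn_ord i)); rewrite mul0rz.
Qed.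

Lemma lattice_basis_has_nonzero (b : seq F) :
  is_lattice_basis b -> has (predC1 0) b.
Proof.
case=> size_b free_b; apply/hasP.
have b_gt0 : (0 < size b)%N by rewrite size_b; exact: (adim_gt0 (aspacef F)).
exists b`_0; first exact: mem_nth.
apply: contraTneq free_b => b0_eq0.
rewrite free_directv negb_and; apply/orP; left.
by rewrite negbK -b0_eq0 mem_nth.
Qed.

End IntegralSpan.

Section Stratum.
Variables (F : fieldExtType rat) (V H : finType).
Variables (vtx : H -> V) (inv : H -> H) (w : H -> F).

Lemma weighted_curve_has_nonzero_weight (b : seq F) :
  is_lattice_basis b -> F_weighted_stable_curve vtx inv w b ->
  exists h, w h != 0.
Proof.
move=> /lattice_basis_has_nonzero /hasP [z zb /= z_neq0] [_ _ _ span_eq].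
have /in_zspan_has_nonzero /(_ z_neq0) /hasP [_ /mapP [h _ ->] wh_neq0] :=
  proj2 (span_eq z) (in_zspan_mem zb).
by exists h.
Qed.

Lemma tens_weight_sqr_in_span h : tens (w h) (w h) \in weight_squares_span w.
Proof. exact: (subvP (sumv_sup h (P := xpredT) isT (subvv _))) (memv_line _). Qed.

Lemma N_S_sub_C_S x : N_S w x -> C_S w x.
Proof. by move=> Nx h; rewrite Nx ?tens_weight_sqr_in_span. Qed.

Lemma C_S_tens_sqr (t : F) : C_S w (tens t t).
Proof. by move=> h; rewrite tpair_tens_sqr sqr_ge0. Qed.

Lemma tens_inv_weight_notin_N_S h : w h != 0 ->
  ~ N_S w (tens (w h)^-1 (w h)^-1).
Proof.
move=> wh_neq0 /(_ _ (tens_weight_sqr_in_span h)) /eqP.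
rewrite tpair_tens_sqr trpair_Vf // sqrf_eq0 pnatr_eq0.
by apply/negP; rewrite -lt0n; exact: (adim_gt0 (aspacef F)).
Qed.

End Stratum.

Theorem corollary3p2 (F : fieldExtType rat) (F_totally_real : totally_real F)
  (b : seq F) (Ib : is_lattice_basis b)
  (V H : finType) (vtx : H -> V) (inv : H -> H) (w : H -> F)
  (curve : F_weighted_stable_curve vtx inv w b) :
  (forall x, N_S w x -> C_S w x) /\
  (exists x : tensF F, C_S w x /\ ~ N_S w x).
Proof.
split; first exact: N_S_sub_C_S.
have [h wh_neq0] := weighted_curve_has_nonzero_weight Ib curve.
exists (tens (w h)^-1 (w h)^-1); split; first exact: C_S_tens_sqr.
exact: tens_inv_weight_notin_N_S.
Qed.
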